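(* For all even $n\ge2$ and even $q\ge2$, $$A_{BMU}(n,q)\le\frac{\binom{n}{n/2}\left(\frac q2\right)^n}{n}.$$ In particular (as $\binom{n}{n/2}\approx 2^{n+1}/\sqrt{2\pi n}$), the redundancy of balanced MU codes is at least $1.5\log_q n+O(1)$.
   Context: $\Sigma_q=\{0,\dots,q-1\}$ with $q$ even, $n$ even. A word $\vec a\in\Sigma_q^n$ is balanced if the number of positions $i$ with $a_i\in[0,q/2-1]$ equals $n/2$ (for $q=2$: Hamming weight $n/2$). A code $\mathcal C\subseteq\Sigma_q^n$ is mutually uncorrelated (MU) if for any two not necessarily distinct codewords $\vec a,\vec b$, no proper nonempty prefix of $\vec a$ equals a suffix of $\vec b$ of the same length. A balanced MU code is an MU code all of whose codewords are balanced; $A_{BMU}(n,q)$ is the largest size of a balanced MU code in $\Sigma_q^n$. Redundancy of $A\subseteq\Sigma_q^n$ is $n-\log_q|A|$. *)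

From mathcomp Require Import all_boot.
Set Implicit Arguments. Unset Strict Implicit. Unset Printing Implicit Defensive.

Definition word (n q : nat) := (n.-tuple 'I_q)%type.

Definition balanced (n q : nat) (a : word n q) : bool :=
  count (fun x : 'I_q => (x : nat) < q %/ 2) a == n %/ 2.

Definition mutually_uncorrelated (n q : nat) (C : {set word n q}) : bool :=
  [forall a in C, forall b in C, forall k : 'I_n,
     (0 < k) ==> (take k (val a) != drop (n - k) (val b))].

Definition balanced_MU (n q : nat) (C : {set word n q}) : bool :=
  mutually_uncorrelated C && [forall a in C, balanced a].

Definition A_BMU (n q : nat) : nat :=
  \max_(C : {set word n q} | balanced_MU C) #|C|.

(* Since C is mutually uncorrelated, a nontrivial cyclic shift of a codeword
   is never a codeword, so the n shifts of the codewords of C are n |C|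
   distinct words.  They are all balanced, and a balanced word over an
   alphabet of size 2d is determined by the n/2-subset of positions carrying
   a low symbol together with its symbols reduced mod d; hence there are at
   most C(n, n/2) d^n of them. *)

From mathcomp Require Import all_boot zify.

Set Implicit Arguments.
Unset Strict Implicit.
Unset Printing Implicit Defensive.

Lemma count_tnth n (T : Type) (t : n.-tuple T) (p : pred T) :
  count p t = #|[set i : 'I_n | p (tnth t i)]|.
Proof.
rewrite -[in LHS](map_tnth_enum t) count_map cardsE cardE.
by rewrite -size_filter /enum_mem -enumT /= filter_predT.
Qed.

Lemma balanced_rot n q (i : nat) (a : word n q) :
  balanced (rot_tuple i a) = balanced a.
Proof. by rewrite /balanced; congr (_ == _); apply/permP; rewrite perm_rot. Qed.

Section MutuallyUncorrelated.

Variables (n q : nat) (C : {set word n q}).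
Hypothesis C_MU : mutually_uncorrelated C.

Lemma MU_rot_notin (a b : word n q) (k : nat) :
  a \in C -> b \in C -> 0 < k < n -> rot k (val b) != val a.
Proof.
move=> aC bC /andP [k_gt0 k_lt_n]; apply/eqP => ab.
have nk_lt_n : n - k < n by lia.
have nk_gt0 : 0 < n - k by lia.
move: C_MU => /forallP /(_ a) /implyP /(_ aC) /forallP /(_ b) /implyP /(_ bC)
  /forallP /(_ (Ordinal nk_lt_n)) /implyP /(_ nk_gt0) /=.
by rewrite -ab /rot take_size_cat ?size_drop ?size_tuple ?subKn ?eqxx //; lia.
Qed.

Lemma MU_rot_inj :
  {in setX C [set: 'I_n] &, injective (fun p : word n q * 'I_n => rot_tuple p.2 p.1)}.
Proof.
suff le_inj (a b : word n q) (i j : 'I_n) : a \in C -> b \in C -> i <= j ->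
    rot i (val a) = rot j (val b) -> (a, i) = (b, j).
  move=> [a i] [b j] /setXP [aC _] /setXP [bC _] /(congr1 val) /= ab.
  by case: (leqP i j) => [|/ltnW] ij; [|symmetry]; apply: le_inj.
move=> aC bC ij.
have -> : (j : nat) = i + (j - i) by lia.
rewrite rotD ?size_tuple; last by have := ltn_ord j; lia.
move/rot_inj => ab.
have ij0 : j - i = 0.
  apply/eqP; apply: contraTT (eqxx (val a)) => ij_ne0.
  rewrite [X in _ != X]ab eq_sym; apply: MU_rot_notin => //.
  by have := ltn_ord j; lia.
rewrite ij0 rot0 in ab.
by congr (_, _); apply: val_inj => //=; lia.
Qed.

End MutuallyUncorrelated.

Section BalancedWords.

Variables (n d : nat).
Local Notation q := (d.+1 * 2).

Lemma eq_of_half_mod (x y : nat) : x < q -> y < q ->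
  (x < d.+1) = (y < d.+1) -> x %% d.+1 = y %% d.+1 -> x = y.
Proof.
have div_lt k z : (z < d.+1 * k) = (z %/ d.+1 < k) by rewrite ltn_divLR // mulnC.
rewrite !div_lt => x2 y2 low_xy mod_xy.
have {}low_xy : (x %/ d.+1 < 1) = (y %/ d.+1 < 1) by rewrite -!div_lt !muln1.
rewrite (divn_eq x d.+1) (divn_eq y d.+1) mod_xy; congr (_ * _ + _).
by move: (x %/ d.+1) (y %/ d.+1) x2 y2 low_xy; lia.
Qed.

Definition split_half (a : word n q) : {set 'I_n} * {ffun 'I_n -> 'I_d.+1} :=
  ([set i | (tnth a i : nat) < q %/ 2], [ffun i => inord (tnth a i %% d.+1)]).

Lemma split_half_inj : injective split_half.
Proof.
move=> a b [low_ab mod_ab]; apply: eq_from_tnth => i; apply: val_inj.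
apply: eq_of_half_mod; try exact: ltn_ord.
- have := congr1 (fun S : {set 'I_n} => i \in S) low_ab.
  by rewrite !inE mulnK.
- have := congr1 (fun f : {ffun _ -> 'I_d.+1} => val (f i)) mod_ab.
  by rewrite !ffunE /= !inordK ?ltn_pmod.
Qed.

Lemma card_balanced_le :
  #|[set a : word n q | balanced a]| <= 'C(n, n %/ 2) * d.+1 ^ n.
Proof.
pose D := setX [set S : {set 'I_n} | #|S| == n %/ 2] [set: {ffun 'I_n -> 'I_d.+1}].
have -> : 'C(n, n %/ 2) * d.+1 ^ n = #|D|.
  by rewrite cardsX card_draws cardsT card_ffun !card_ord.
rewrite -(card_imset _ split_half_inj); apply: subset_leq_card.
apply/subsetP => _ /imsetP [a bal_a ->].
by move: bal_a; rewrite !inE andbT /balanced count_tnth.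
Qed.

Lemma balanced_MU_card_le (C : {set word n q}) :
  balanced_MU C -> n * #|C| <= 'C(n, n %/ 2) * d.+1 ^ n.
Proof.
move=> /andP [C_MU /forall_inP C_bal].
apply: leq_trans (card_balanced_le).
rewrite mulnC -[n in _ * n]card_ord -cardsT -cardsX -(card_in_imset (MU_rot_inj C_MU)).
apply/subset_leq_card/subsetP => _ /imsetP [[a i] /setXP [aC _] ->].
by rewrite inE balanced_rot C_bal.
Qed.

End BalancedWords.

Theorem theorem7 (n q : nat) (hn2 : 2 <= n) (hne : ~~ odd n)
    (hq2 : 2 <= q) (hqe : ~~ odd q) :
  n * A_BMU n q <= 'C(n, n %/ 2) * (q %/ 2) ^ n.
Proof.
have [d ->] : exists d, q = d.+1 * 2.
  by exists (q %/ 2).-1; rewrite prednK ?divn_gt0 ?divnK ?dvdn2.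
rewrite mulnK // /A_BMU.
elim/big_ind: _ => [|x y|C]; first by rewrite muln0.
- by rewrite maxnMr geq_max => ->.
- exact: balanced_MU_card_le.
Qed.
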